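(* Let $n\ge1$, $\nu\ge1$ be integers and $\delta\in\{0,1,2\}$. The orthogonal graph $\mathcal{O}^{(2\nu+\delta)}_{2^n}$ is vertex transitive and arc transitive.
   Context: Let $V^{2\nu+\delta}$ be the set of tuples $\vec a=(a_1,\ldots,a_{2\nu+\delta})\in(\mathbb{Z}_{2^n})^{2\nu+\delta}$ such that some $a_i$ is a unit of $\mathbb{Z}_{2^n}$. Write $\vec a\sim\vec b$ if $\vec a=\lambda\vec b$ for some $\lambda\in\mathbb{Z}_{2^n}^\times$, let $[\vec a]$ denote the equivalence class and $V^{2\nu+\delta}_\sim$ the set of classes. Let $G_{2\nu+\delta,\Delta}=\begin{pmatrix}0&I_\nu&\\ &0&\\ &&\Delta\end{pmatrix}$ over $\mathbb{Z}_{2^n}$ (first two block sizes $\nu$, unspecified blocks zero), where $\Delta$ is empty if $\delta=0$, $\Delta=(1)$ if $\delta=1$, and $\Delta=\begin{pmatrix}z&1\\0&z\end{pmatrix}$ if $\delta=2$, with $z$ a fixed unit of $\mathbb{Z}_{2^n}$. The orthogonal graph $\mathcal{O}^{(2\nu+\delta)}_{2^n}$ has vertex set $\{[\vec a]\in V^{2\nu+\delta}_\sim:\vec a\,G_{2\nu+\delta,\Delta}\,\vec a^t=0\}$, with $[\vec a]$ adjacent to $[\vec b]$ iff $\vec a(G_{2\nu+\delta,\Delta}+G_{2\nu+\delta,\Delta}^t)\vec b^t\in\mathbb{Z}_{2^n}^\times$. A graph is arc transitive if its automorphism group acts transitively on ordered pairs of adjacent vertices. *)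

From HB Require Import structures.
From mathcomp Require Import all_boot all_order all_algebra.
Set Implicit Arguments. Unset Strict Implicit. Unset Printing Implicit Defensive.
Import GRing.Theory.
Local Open Scope ring_scope.

Notation Zmod2n n := 'Z_(2 ^ n)%N.

(* The Gram matrix G_{2nu+delta,Delta} (indices 0-based):
   - entry (i, i+nu) = 1 for i < nu                       (the block I_nu)
   - diagonal entries at positions >= 2nu are z if delta = 2, 1 if delta = 1
   - entry (2nu, 2nu+1) = 1 (only exists when delta = 2)
   everything else 0. *)
Definition Gmat (n nu delta : nat) (z : Zmod2n n) : 'M[Zmod2n n]_(2 * nu + delta) :=
  \matrix_(i, j)
    if (i < nu)%N && (nat_of_ord j == i + nu)%N then 1
    else if (nat_of_ord i == j) && (2 * nu <= i)%N then (if delta == 2%N then z else 1)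
    else if (nat_of_ord i == 2 * nu)%N && (nat_of_ord j == (2 * nu).+1)%N then 1
    else 0.

Section Graph.
Variables (n nu delta : nat) (z : Zmod2n n).
Local Notation R := (Zmod2n n).
Local Notation m := (2 * nu + delta)%N.
Local Notation G := (Gmat nu delta z).

Definition unimodular (a : 'rV[R]_m) : bool := [exists i, a 0 i \is a GRing.unit].

Definition isotropic (a : 'rV[R]_m) : bool := (a *m G *m a^T) 0 0 == 0.

Definition vclass (a : 'rV[R]_m) : {set 'rV[R]_m} :=
  [set l *: a | l : R & l \is a GRing.unit].

Definition orth_vertices : {set {set 'rV[R]_m}} :=
  [set vclass a | a : 'rV[R]_m & unimodular a && isotropic a].

(* adjacency: a (G + G^t) b^t is a unit (for representatives; independent of
   the choice of representatives) *)
Definition orth_adj : rel {set 'rV[R]_m} :=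
  fun C D => [exists a in C, exists b in D,
                (a *m (G + G^T) *m b^T) 0 0 \is a GRing.unit].
End Graph.

Definition graph_aut (T : finType) (V : {set T}) (e : rel T) (f : T -> T) : Prop :=
  [/\ {in V &, injective f}, f @: V = V & {in V &, forall x y, e (f x) (f y) = e x y}].

Definition vertex_transitive (T : finType) (V : {set T}) (e : rel T) : Prop :=
  forall x y, x \in V -> y \in V -> exists f, graph_aut V e f /\ f x = y.

Definition arc_transitive (T : finType) (V : {set T}) (e : rel T) : Prop :=
  forall x y u w, x \in V -> y \in V -> u \in V -> w \in V ->
    e x y -> e u w -> exists f, graph_aut V e f /\ f x = u /\ f y = w.

Arguments Gmat : clear implicits.
Arguments unimodular : clear implicits.
Arguments isotropic : clear implicits.
Arguments vclass : clear implicits.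
Arguments orth_vertices : clear implicits.
Arguments orth_adj : clear implicits.

(* An isometry [g] of the quadratic form [Q x = x G x^T] (an invertible matrix
   with [Q (x g) = Q x]) maps classes [[a]] to [[a g]], preserving vertices and
   adjacency.  So it suffices to move every vertex to [[e_0]], and every arc to
   ([[e_0]], [[e_nu]]), by isometries.

   The workhorse is an Eichler transformation: if (e, f) is a hyperbolic pair
   and a is isotropic with B(a, f) a unit, some Eichler transformation fixing
   f sends a to B(a, f) e.  A vertex [a] has a unit coordinate a_k with
   k < 2 nu, because in Z_(2^n) the units are the odd residues; otherwise a
   would be congruent mod 2 to its tail on the last delta coordinates, where
   the form is anisotropic mod 2.  The pair (e_k, e_(k +- nu)) then moves [a]
   to [e_k], and a reflection or another Eichler transformation moves e_k to
   e_0.  Finally the pair (e_nu, e_0) moves a neighbour of [e_0] to [e_nu]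
   while fixing e_0. *)

From HB Require Import structures.
From mathcomp Require Import all_boot all_order all_algebra.
From mathcomp Require Import ring zify.
Set Implicit Arguments. Unset Strict Implicit. Unset Printing Implicit Defensive.
Import GRing.Theory.
Local Open Scope ring_scope.

Lemma unitmx_rinv (R : comUnitRingType) m (g h : 'M[R]_m) :
  (forall x : 'rV[R]_m, x *m g *m h = x) -> g \in unitmx.
Proof.
move=> ghK; have gh1 : g *m h = 1%:M.
  by apply/row_matrixP => i; rewrite row_mul row1 rowE ghK.
by case: (mulmx1_unit gh1).
Qed.

Lemma row_support_sum (R : nzRingType) m (x : 'rV[R]_m) (S : {set 'I_m}) :
  (forall k, k \notin S -> x 0 k = 0) -> x = \sum_(k in S) x 0 k *: 'e_k.
Proof.
move=> x_out; rewrite {1}[x]row_sum_delta (bigID (mem S)) /=.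
by rewrite [X in _ + X]big1 ?addr0 // => k /x_out ->; rewrite scale0r.
Qed.

Section QuadraticForm.
Variables (R : comUnitRingType) (m : nat) (G : 'M[R]_m).
Implicit Types (x y w a e f p q u v : 'rV[R]_m) (g h : 'M[R]_m).

Definition gram x y := (x *m G *m y^T) 0 0.
Definition qform x := gram x x.
Definition polar x y := (x *m (G + G^T) *m y^T) 0 0.

Lemma gramDl x y w : gram (x + y) w = gram x w + gram y w.
Proof. by rewrite /gram !mulmxDl mxE. Qed.
Lemma gramDr x y w : gram w (x + y) = gram w x + gram w y.
Proof. by rewrite /gram linearD /= mulmxDr mxE. Qed.
Lemma gramZl c x w : gram (c *: x) w = c * gram x w.
Proof. by rewrite /gram -!scalemxAl mxE. Qed.
Lemma gramZr c x w : gram w (c *: x) = c * gram w x.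
Proof. by rewrite /gram linearZ /= -scalemxAr mxE. Qed.
Lemma gramNl x w : gram (- x) w = - gram x w.
Proof. by rewrite -scaleN1r gramZl mulN1r. Qed.
Lemma gramNr x w : gram w (- x) = - gram w x.
Proof. by rewrite -scaleN1r gramZr mulN1r. Qed.

Lemma gram_delta i j : gram 'e_i 'e_j = G i j.
Proof. by rewrite /gram -rowE trmx_delta -colE !mxE. Qed.

Lemma polarE x y : polar x y = gram x y + gram y x.
Proof.
rewrite /polar /gram mulmxDr mulmxDl mxE; congr (_ + _).
transitivity ((y *m G *m x^T)^T 0 0); last by rewrite mxE.
by rewrite !trmx_mul trmxK mulmxA.
Qed.

Definition gramE := (polarE, gramDl, gramDr, gramNl, gramNr, gramZl, gramZr).

Lemma polarC x y : polar x y = polar y x.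
Proof. by rewrite !polarE addrC. Qed.

Lemma polarDr x y w : polar w (x + y) = polar w x + polar w y.
Proof. by rewrite !gramE; ring. Qed.
Lemma polarBr x y w : polar w (x - y) = polar w x - polar w y.
Proof. by rewrite !gramE; ring. Qed.
Lemma polarBl x y w : polar (x - y) w = polar x w - polar y w.
Proof. by rewrite !gramE; ring. Qed.
Lemma polarZl c x y : polar (c *: x) y = c * polar x y.
Proof. by rewrite !gramE; ring. Qed.
Lemma polar_diag x : polar x x = 2%:R * qform x.
Proof. by rewrite /qform !gramE; ring. Qed.
Lemma qformD x y : qform (x + y) = qform x + qform y + polar x y.
Proof. by rewrite /qform !gramE; ring. Qed.
Lemma polarZr c x y : polar x (c *: y) = c * polar x y.
Proof. by rewrite !gramE; ring. Qed.
Lemma qformZ c x : qform (c *: x) = c ^+ 2 * qform x.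
Proof. by rewrite /qform !gramE; ring. Qed.
Lemma qformB x y : qform (x - y) = qform x + qform y - polar x y.
Proof. by rewrite /qform !gramE; ring. Qed.
Lemma qform_scale_add c x y :
  qform (c *: x + y) = qform y + c * (c * qform x + polar x y).
Proof. by rewrite /qform !gramE; ring. Qed.

Definition isometry g := g \in unitmx /\ forall x, qform (x *m g) = qform x.

Lemma isometry1 : isometry 1%:M.
Proof. by split=> [|x]; rewrite ?unitmx1 ?mulmx1. Qed.

Lemma isometryM g h : isometry g -> isometry h -> isometry (g *m h).
Proof.
move=> [gU gQ] [hU hQ]; split=> [|x]; first by rewrite unitmx_mul gU hU.
by rewrite mulmxA hQ gQ.
Qed.

Lemma isometryV g : isometry g -> isometry (invmx g).
Proof.
move=> [gU gQ]; split=> [|x]; first by rewrite unitmx_inv.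
by rewrite -{2}(mulmxKV gU x) gQ.
Qed.

Lemma polar_isometry g x y : isometry g -> polar (x *m g) (y *m g) = polar x y.
Proof.
have polarQ u v : polar u v = qform (u + v) - qform u - qform v.
  by rewrite qformD; ring.
by move=> [_ gQ]; rewrite !polarQ -mulmxDl !gQ.
Qed.

Definition dyad p q := (G + G^T) *m p^T *m q.

Lemma mul_dyad x p q : x *m dyad p q = polar x p *: q.
Proof. by rewrite /dyad !mulmxA (mx11_scalar (x *m _ *m _)) mul_scalar_mx. Qed.

Definition eichler e u := 1%:M + dyad e u - dyad u e - qform u *: dyad e e.

Lemma mul_eichler x e u :
  x *m eichler e u = x + polar x e *: u - polar x u *: e - (qform u * polar x e) *: e.
Proof. by rewrite /eichler !mulmxDr !mulmxN mulmx1 -scalemxAr !mul_dyad scalerA. Qed.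

Lemma eichler_isometry e u : qform e = 0 -> polar e u = 0 -> isometry (eichler e u).
Proof.
rewrite /qform polarE => ee0 eu0.
have ue : gram u e = - gram e u by apply/eqP; rewrite -subr_eq0 opprK addrC eu0.
split=> [|x]; last by rewrite mul_eichler /qform !gramE ue ee0; ring.
apply: (@unitmx_rinv _ _ _ (eichler e (- u))) => x.
rewrite !mul_eichler /qform !gramE ue ee0.
by apply/rowP => j; rewrite !mxE; ring.
Qed.

Definition reflection v := 1%:M - (qform v)^-1 *: dyad v v.

Lemma mul_reflection x v : x *m reflection v = x - ((qform v)^-1 * polar x v) *: v.
Proof. by rewrite /reflection mulmxDr mulmxN mulmx1 -scalemxAr mul_dyad scalerA. Qed.

Lemma reflection_isometry v : qform v \is a GRing.unit -> isometry (reflection v).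
Proof.
move=> vU; have vK : (qform v)^-1 * qform v = 1 by rewrite mulVr.
(* [ring] cannot use [vK]: isolate the factor [(qform v)^-1 * qform v - 1]. *)
have polar_refl x : polar (x *m reflection v) v = - polar x v.
  rewrite mul_reflection polarBl polarZl polar_diag.
  transitivity (- polar x v - 2%:R * polar x v * ((qform v)^-1 * qform v - 1)); first ring.
  by rewrite vK subrr mulr0 subr0.
split=> [|x].
  apply: (@unitmx_rinv _ _ _ (reflection v)) => x.
  by rewrite mul_reflection polar_refl mulrN scaleNr opprK mul_reflection subrK.
rewrite mul_reflection qformB qformZ polarZr.
transitivity (qform x + (qform v)^-1 * polar x v ^+ 2 * ((qform v)^-1 * qform v - 1)); first ring.
by rewrite vK subrr mulr0 addr0.
Qed.

Lemma isometry_isotropic_to_hyperbolic e f a :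
  qform e = 0 -> qform f = 0 -> polar e f = 1 -> qform a = 0 ->
  polar a f \is a GRing.unit ->
  exists g, [/\ isometry g, a *m g = polar a f *: e & f *m g = f].
Proof.
move=> qe qf pef qa afU.
(* The Eichler transformation along [f] and a multiple of [w] sends [a] to
   [B(a, f) e + d f], and [Q a = 0] forces [d = 0]. *)
pose w := a - polar a f *: e - polar a e *: f.
have pfw : polar f w = 0.
  by rewrite /w !polarBr !polarZr (polarC f a) (polarC f e) pef polar_diag qf; ring.
pose u := - (polar a f)^-1 *: w.
have pfu : polar f u = 0 by rewrite /u polarZr pfw mulr0.
exists (eichler f u); split; first exact: eichler_isometry.
  pose d := polar a e - polar a u - qform u * polar a f.
  have ag : a *m eichler f u = polar a f *: e + d *: f.
    rewrite mul_eichler {2}/u scalerA mulrN mulrV // scaleN1r /w /d.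
    by apply/rowP => j; rewrite !mxE; ring.
  have afd : polar a f * d = 0.
    have [_ gQ] := eichler_isometry qf pfu.
    rewrite -qa -(gQ a) ag qformD !qformZ polarZl polarZr qe qf pef; ring.
  by rewrite ag -[d](mulKr afU) afd mulr0 scale0r addr0.
by rewrite mul_eichler polar_diag qf mulr0 pfu !scale0r mulr0 scale0r !subr0 addr0.
Qed.

End QuadraticForm.

Section Z2n.
Variable n : nat.
Hypothesis n_gt0 : (0 < n)%N.
Local Notation R := 'Z_(2 ^ n).

Lemma unitZ2n_nat k : ((k%:R : R) \is a GRing.unit) = odd k.
Proof.
have n2_gt1 : (1 < 2 ^ n)%N by rewrite -{1}(expn0 2) ltn_exp2l.
by rewrite unitZpE // coprime_pexpl // coprime2n.
Qed.

Lemma unitZ2nE (x : R) : (x \is a GRing.unit) = odd x.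
Proof. by rewrite -unitZ2n_nat natr_Zp. Qed.

Lemma unitZ2nD (x y : R) :
  (x + y \is a GRing.unit) = (x \is a GRing.unit) (+) (y \is a GRing.unit).
Proof. by rewrite -[x]natr_Zp -[y]natr_Zp -natrD !unitZ2n_nat oddD. Qed.

Lemma double_nonunitZ2n (y : R) : 2%:R * y \isn't a GRing.unit.
Proof. by rewrite unitrM unitZ2n_nat. Qed.

Lemma nonunitZ2n_double (x : R) : x \isn't a GRing.unit -> x = 2%:R * (x./2)%:R.
Proof.
rewrite unitZ2nE => x_even; rewrite -[LHS]natr_Zp -natrM; congr (_%:R).
by rewrite -{1}(odd_double_half x) (negbTE x_even) add0n -muln2 mulnC.
Qed.

Lemma rv_nonunitZ2n_double m (x : 'rV[R]_m) :
  (forall k, x 0 k \isn't a GRing.unit) -> exists h, x = 2%:R *: h.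
Proof.
move=> x_nonunit; exists (\row_k ((x 0 k : nat)./2)%:R).
by apply/rowP => k; rewrite !mxE -nonunitZ2n_double.
Qed.

End Z2n.

Section OrthogonalGraph.
Variables (n nu delta : nat) (z : 'Z_(2 ^ n)).
Hypotheses (n_gt0 : (0 < n)%N) (nu_gt0 : (0 < nu)%N).
Hypotheses (delta_le2 : (delta <= 2)%N) (z_unit : z \is a GRing.unit).
Local Notation R := 'Z_(2 ^ n).
Local Notation m := (2 * nu + delta)%N.
Local Notation G := (Gmat n nu delta z).
Local Notation Q := (qform G).
Local Notation B := (polar G).
Local Notation unimodular := (unimodular n nu delta).

(* Only meaningful for [k < 2 * nu]: the pairs (e_k, e_(partner k)) are the
   hyperbolic pairs of [G]. *)
Definition partner (k : 'I_m) : 'I_m :=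
  insubd k (if (k < nu)%N then k + nu else k - nu)%N.

Lemma val_partner (k : 'I_m) : (k < 2 * nu)%N ->
  partner k = (if (k < nu)%N then k + nu else k - nu)%N :> nat.
Proof. by move=> k_lt; rewrite val_insubd; case: ifP; case: ifP => //; lia. Qed.

Lemma partner_lt (k : 'I_m) : (k < 2 * nu)%N -> (partner k < 2 * nu)%N.
Proof. by move=> k_lt; rewrite val_partner //; case: ifP; lia. Qed.

Lemma partnerK (k : 'I_m) : (k < 2 * nu)%N -> partner (partner k) = k.
Proof.
move=> k_lt; apply: val_inj => /=.
rewrite val_partner ?partner_lt // val_partner //.
by case: (ltnP k nu) => ?; case: ifP; lia.
Qed.

Lemma Gmat_polar_entry (i k : 'I_m) : (k < 2 * nu)%N ->
  (G + G^T) i k = (i == partner k)%:R.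
Proof.
move=> k_lt; rewrite (_ : (i == _) = ((i : nat) == partner k)) // val_partner //.
rewrite !mxE.
case: (ltnP k nu) => ?; do ![case: ifP]; move=> *; rewrite ?addr0 ?add0r; case: eqP => // *; lia.
Qed.

Lemma qform_delta (k : 'I_m) : (k < 2 * nu)%N -> Q 'e_k = 0.
Proof. by move=> k_lt; rewrite /qform gram_delta mxE; do ![case: ifP] => //; lia. Qed.

Lemma polar_delta x (k : 'I_m) : (k < 2 * nu)%N -> B x 'e_k = x 0 (partner k).
Proof.
move=> k_lt; rewrite /polar trmx_delta -colE !mxE (bigD1 (partner k)) //= big1.
  by rewrite Gmat_polar_entry // eqxx mulr1 addr0.
by move=> i /negbTE i_neq; rewrite Gmat_polar_entry // i_neq mulr0.
Qed.

Lemma qform_tail_unit_delta1 (t : 'rV[R]_(2 * nu + 1)) (k : 'I_(2 * nu + 1)) :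
  (forall j : 'I_(2 * nu + 1), (j < 2 * nu)%N -> t 0 j = 0) ->
  (2 * nu <= k)%N -> t 0 k \is a GRing.unit -> qform (Gmat n nu 1 z) t \is a GRing.unit.
Proof.
move=> t_head k_tail tk.
have p_lt : (2 * nu < 2 * nu + 1)%N by rewrite addn1.
pose p := Ordinal p_lt.
have kp : k = p by apply: val_inj => /=; have := ltn_ord k; lia.
rewrite (@row_support_sum _ _ t [set p]); last first.
  move=> j; rewrite inE -val_eqE /= => jp; apply: t_head; have := ltn_ord j; lia.
have Gpp : Gmat n nu 1 z p p = 1 by rewrite mxE /=; do ![case: ifP] => //= *; lia.
by rewrite big_set1 qformZ /qform gram_delta Gpp mulr1 expr2 unitrM -kp tk.
Qed.

Lemma qform_tail_unit_delta2 (t : 'rV[R]_(2 * nu + 2)) (k : 'I_(2 * nu + 2)) :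
  (forall j : 'I_(2 * nu + 2), (j < 2 * nu)%N -> t 0 j = 0) ->
  (2 * nu <= k)%N -> t 0 k \is a GRing.unit -> qform (Gmat n nu 2 z) t \is a GRing.unit.
Proof.
move=> t_head k_tail tk.
have p_lt : (2 * nu < 2 * nu + 2)%N by rewrite addn2 ltnS leqnSn.
have q_lt : ((2 * nu).+1 < 2 * nu + 2)%N by rewrite addn2.
pose p := Ordinal p_lt; pose q := Ordinal q_lt.
have pq : p != q by rewrite -val_eqE /=; lia.
rewrite (@row_support_sum _ _ t [set p; q]); last first.
  move=> j; rewrite !inE -!val_eqE /= => jpq; apply: t_head; have := ltn_ord j; lia.
rewrite big_setU1 ?inE //= big_set1 qformD !qformZ polarZl polarZr polarE /qform !gram_delta.
have Gpp : Gmat n nu 2 z p p = z by rewrite mxE /=; do ![case: ifP] => //= *; lia.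
have Gqq : Gmat n nu 2 z q q = z by rewrite mxE /=; do ![case: ifP] => //= *; lia.
have Gpq : Gmat n nu 2 z p q = 1 by rewrite mxE /=; do ![case: ifP] => //= *; lia.
have Gqp : Gmat n nu 2 z q p = 0 by rewrite mxE /=; do ![case: ifP] => //= *; lia.
have : (t 0 p \is a GRing.unit) || (t 0 q \is a GRing.unit).
  have kpq : (k == p) || (k == q) by rewrite -!val_eqE /=; have := ltn_ord k; lia.
  by case/orP: kpq => /eqP <-; rewrite tk ?orbT.
rewrite Gpp Gqq Gpq Gqp addr0 mulr1 !unitZ2nD // !unitrM ?z_unit /=.
(* modulo 2 the form is [x^2 + xy + y^2], which vanishes only at [x = y = 0] *)
by case: (t 0 p \is a GRing.unit); case: (t 0 q \is a GRing.unit).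
Qed.

Lemma qform_tail_unit (t : 'rV_m) :
  (forall k : 'I_m, (k < 2 * nu)%N -> t 0 k = 0) ->
  (exists k, t 0 k \is a GRing.unit) -> Q t \is a GRing.unit.
Proof.
move=> t_head [k tk].
have k_tail : (2 * nu <= k)%N.
  by rewrite leqNgt; apply: contraTN tk => /t_head ->; rewrite unitr0.
move: t k t_head tk k_tail; case: delta delta_le2 => [|[|[|//]]] _ t k t_head tk k_tail.
- by have := ltn_ord k; lia.
- exact: qform_tail_unit_delta1 t_head k_tail tk.
- exact: qform_tail_unit_delta2 t_head k_tail tk.
Qed.

Lemma polar_delta_delta (i k : 'I_m) : (k < 2 * nu)%N ->
  B 'e_i 'e_k = (partner k == i)%:R.
Proof. by move=> k_lt; rewrite polar_delta // mxE eqxx. Qed.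

Lemma unimodular_head_unit a : unimodular a -> Q a = 0 ->
  exists2 k : 'I_m, (k < 2 * nu)%N & a 0 k \is a GRing.unit.
Proof.
move=> /existsP[k ak] Qa.
case: (boolP [exists j : 'I_m, (j < 2 * nu)%N && (a 0 j \is a GRing.unit)]).
  by case/existsP => j /andP[j_lt aj]; exists j.
move=> /existsPn head_nonunit; exfalso.
(* [a - t] has even coordinates, so [Q t] is even, against [qform_tail_unit]. *)
pose t : 'rV[R]_m := \row_j (if (j < 2 * nu)%N then 0 else a 0 j).
have [h a_eq] : exists h, a - t = 2%:R *: h.
  apply: rv_nonunitZ2n_double => // j; rewrite !mxE.
  case: ifP => j_lt; last by rewrite subrr unitr0.
  by rewrite subr0; move: (head_nonunit j); rewrite j_lt.
have : Q t \is a GRing.unit.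
  apply: qform_tail_unit => [j j_lt|]; first by rewrite mxE j_lt.
  exists k; rewrite mxE; case: ifP => // k_lt.
  by move: (head_nonunit k); rewrite k_lt ak.
have : Q a = Q t + 2%:R * (2%:R * Q h + B h t).
  by rewrite -[a](subrK t) a_eq qform_scale_add.
rewrite Qa => /eqP; rewrite eq_sym addr_eq0 => /eqP ->.
by rewrite unitrN (negbTE (double_nonunitZ2n _ _)).
Qed.

Fact i0_subproof : (0 < m)%N. Proof. lia. Qed.
Fact inu_subproof : (nu < m)%N. Proof. lia. Qed.
Definition i0 : 'I_m := Ordinal i0_subproof.
Definition inu : 'I_m := Ordinal inu_subproof.

Lemma i0_lt : (i0 < 2 * nu)%N. Proof. by rewrite /=; lia. Qed.
Lemma inu_lt : (inu < 2 * nu)%N. Proof. by rewrite /=; lia. Qed.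
Lemma partner_i0 : partner i0 = inu.
Proof. by apply: val_inj; rewrite /= val_partner ?i0_lt // nu_gt0. Qed.
Lemma partner_inu : partner inu = i0.
Proof. by rewrite -partner_i0 partnerK ?i0_lt. Qed.

Lemma isometry_delta_to_i0 (k : 'I_m) : (k < 2 * nu)%N ->
  exists g, isometry G g /\ 'e_k *m g = 'e_i0 :> 'rV_m.
Proof.
move=> k_lt.
have [-> | k_neq0] := eqVneq k i0.
  by exists 1%:M; split; [exact: isometry1 | rewrite mulmx1].
have [-> | k_neqnu] := eqVneq k inu.
  (* the reflection in [e_0 - e_nu] swaps [e_0] and [e_nu] *)
  pose v : 'rV[R]_m := 'e_i0 - 'e_inu.
  have Qv : Q v = -1.
    rewrite qformB !qform_delta ?i0_lt ?inu_lt // polar_delta_delta ?inu_lt //.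
    by rewrite partner_inu eqxx !add0r.
  exists (reflection G v); split.
    by apply: reflection_isometry; rewrite Qv unitrN unitr1.
  rewrite mul_reflection Qv invrN1 polarBr polar_delta_delta ?i0_lt // partner_i0 eqxx.
  by rewrite polar_diag qform_delta ?inu_lt // mulr0 subr0 mulr1 scaleN1r opprK addrC subrK.
pose f : 'rV[R]_m := 'e_inu + 'e_(partner k).
have j_lt := partner_lt k_lt.
have Qf : Q f = 0.
  rewrite qformD !qform_delta ?inu_lt // polar_delta_delta // partnerK //.
  by rewrite (negbTE k_neqnu) !add0r.
have pe0f : B 'e_i0 f = 1.
  rewrite polarDr !polar_delta_delta ?inu_lt // partner_inu partnerK // eqxx.
  by rewrite (negbTE k_neq0) addr0.
have pekf : B 'e_k f = 1.
  rewrite polarDr !polar_delta_delta ?inu_lt // partner_inu partnerK // eqxx.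
  by rewrite eq_sym (negbTE k_neq0) add0r.
have pekfU : B 'e_k f \is a GRing.unit by rewrite pekf unitr1.
have [g [gI ekg _]] :=
  isometry_isotropic_to_hyperbolic (qform_delta i0_lt) Qf pe0f (qform_delta k_lt) pekfU.
by exists g; rewrite ekg pekf scale1r.
Qed.

Local Notation vc := (vclass n nu delta).
Local Notation V := (orth_vertices n nu delta z).
Local Notation adj := (orth_adj n nu delta z).

Lemma vclassZ c a : c \is a GRing.unit -> vc (c *: a) = vc a.
Proof.
move=> cU; apply/setP => y; apply/imsetP/imsetP => -[l]; rewrite inE => lU ->.
  by exists (l * c); rewrite ?scalerA // inE unitrM lU cU.
by exists (l / c); rewrite ?scalerA ?divrK // inE unitrM lU unitrV cU.
Qed.

Lemma vclass_refl a : a \in vc a.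
Proof. by apply/imsetP; exists 1; rewrite ?inE ?unitr1 ?scale1r. Qed.

Lemma vclass_vertex a : unimodular a -> Q a = 0 -> vc a \in V.
Proof. by move=> aU Qa; apply/imsetP; exists a; rewrite // inE aU; apply/eqP. Qed.

Lemma vertex_repr C a : C \in V -> a \in C -> [/\ unimodular a, Q a = 0 & C = vc a].
Proof.
case/imsetP => b; rewrite inE => /andP[bU /eqP Qb] -> /imsetP[l]; rewrite inE => lU ->.
split; last by rewrite vclassZ.
- by case/existsP: bU => k bk; apply/existsP; exists k; rewrite mxE unitrM lU bk.
- by rewrite qformZ [qform _ _]Qb mulr0.
Qed.

Lemma isotropic_to_base a : unimodular a -> Q a = 0 ->
  exists g, isometry G g /\ vc (a *m g) = vc 'e_i0.
Proof.
move=> aU Qa; have [k k_lt ak] := unimodular_head_unit aU Qa.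
have j_lt := partner_lt k_lt.
have pkj : B 'e_k 'e_(partner k) = 1 by rewrite polar_delta_delta // partnerK // eqxx.
have paj : B a 'e_(partner k) = a 0 k by rewrite polar_delta // partnerK.
have pajU : B a 'e_(partner k) \is a GRing.unit by rewrite paj.
have [g1 [g1I ag1 _]] :=
  isometry_isotropic_to_hyperbolic (qform_delta k_lt) (qform_delta j_lt) pkj Qa pajU.
have [g2 [g2I kg2]] := isometry_delta_to_i0 k_lt.
exists (g1 *m g2); split; first exact: isometryM.
by rewrite mulmxA ag1 paj -scalemxAl kg2 vclassZ.
Qed.

Lemma isotropic_pair_to_base a b : unimodular a -> Q a = 0 -> Q b = 0 ->
  B a b \is a GRing.unit ->
  exists g, [/\ isometry G g, vc (a *m g) = vc 'e_i0 & vc (b *m g) = vc 'e_inu].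
Proof.
move=> aU Qa Qb abU; have [g [gI ag]] := isotropic_to_base aU Qa.
have /imsetP[c] : a *m g \in vc 'e_i0 by rewrite -ag vclass_refl.
rewrite inE => cU agc.
have Qbg : Q (b *m g) = 0 by case: gI => _ ->.
have bgU : B (b *m g) 'e_i0 \is a GRing.unit.
  by move: abU; rewrite -(polar_isometry _ _ gI) agc polarZl polarC unitrM => /andP[].
have pnu0 : B 'e_inu 'e_i0 = 1 by rewrite polar_delta_delta ?i0_lt // partner_i0 eqxx.
have [h [hI bgh e0h]] :=
  isometry_isotropic_to_hyperbolic (qform_delta inu_lt) (qform_delta i0_lt) pnu0 Qbg bgU.
exists (g *m h); split; first exact: isometryM.
  by rewrite mulmxA agc -scalemxAl e0h vclassZ.
by rewrite mulmxA bgh vclassZ.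
Qed.

Lemma unimodular_mul a g : g \in unitmx -> unimodular a -> unimodular (a *m g).
Proof.
move=> gU; apply: contraLR => /existsPn agN.
have [h agh] := rv_nonunitZ2n_double n_gt0 agN.
by apply/existsPn => k; rewrite -[a](mulmxK gU) agh -scalemxAl mxE double_nonunitZ2n.
Qed.

Definition act_mx (g : 'M[R]_m) (C : {set 'rV[R]_m}) := [set c *m g | c in C].

Lemma act_mx_vclass g a : act_mx g (vc a) = vc (a *m g).
Proof. by rewrite /act_mx -imset_comp; apply: eq_imset => l /=; rewrite scalemxAl. Qed.

Lemma act_mxM g h C : act_mx (g *m h) C = act_mx h (act_mx g C).
Proof. by rewrite /act_mx -imset_comp; apply: eq_imset => c /=; rewrite mulmxA. Qed.

Lemma act_mx_mulV g h C D : h \in unitmx -> act_mx g C = act_mx h D ->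
  act_mx (g *m invmx h) C = D.
Proof.
move=> hU gh; rewrite act_mxM gh -act_mxM mulmxV // /act_mx.
by rewrite (eq_imset _ (@mulmx1 _ _ _)) imset_id.
Qed.

Lemma act_mx_graph_aut g : isometry G g -> graph_aut V adj (act_mx g).
Proof.
move=> gI; have [gU gQ] := gI; split.
- by move=> C D _ _; apply: imset_inj; apply: can_inj (mulmxK gU).
- apply/eqP; rewrite eqEcard card_imset ?leqnn ?andbT; last first.
    by apply: imset_inj; apply: can_inj (mulmxK gU).
  apply/subsetP => _ /imsetP[C CV ->].
  case/imsetP: CV => a; rewrite inE => /andP[aU /eqP Qa] ->.
  by rewrite act_mx_vclass vclass_vertex ?unimodular_mul ?gQ.
- move=> C D _ _; apply/existsP/existsP => -[a /andP[aC /existsP[b /andP[bD abU]]]].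
    case/imsetP: aC abU => c cC ->; case/imsetP: bD => d dD ->.
    rewrite [X in X \is a _ -> _](polar_isometry _ _ gI) => cdU.
    by exists c; rewrite cC; apply/existsP; exists d; rewrite dD.
  exists (a *m g); apply/andP; split; first by apply/imsetP; exists a.
  apply/existsP; exists (b *m g); apply/andP; split; first by apply/imsetP; exists b.
  by rewrite -/(polar G _ _) polar_isometry.
Qed.

Lemma vertex_to_base C : C \in V -> exists g, isometry G g /\ act_mx g C = vc 'e_i0.
Proof.
case/imsetP => a; rewrite inE => /andP[aU /eqP Qa] ->.
by have [g [gI ag]] := isotropic_to_base aU Qa; exists g; rewrite act_mx_vclass.
Qed.

Lemma arc_to_base C D : C \in V -> D \in V -> adj C D ->
  exists g, [/\ isometry G g, act_mx g C = vc 'e_i0 & act_mx g D = vc 'e_inu].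
Proof.
move=> CV DV /existsP[a /andP[aC /existsP[b /andP[bD abU]]]].
have [aU Qa ->] := vertex_repr CV aC; have [_ Qb ->] := vertex_repr DV bD.
have [g [gI ag bg]] := isotropic_pair_to_base aU Qa Qb abU.
by exists g; rewrite !act_mx_vclass.
Qed.

Lemma orth_vertex_transitive : vertex_transitive V adj.
Proof.
move=> C D CV DV.
have [g [gI gC]] := vertex_to_base CV; have [h [hI hD]] := vertex_to_base DV.
exists (act_mx (g *m invmx h)); split.
  exact/act_mx_graph_aut/isometryM/isometryV.
by apply: act_mx_mulV; [case: hI | rewrite gC hD].
Qed.

Lemma orth_arc_transitive : arc_transitive V adj.
Proof.
move=> C D C' D' CV DV C'V D'V CD C'D'.
have [g [gI gC gD]] := arc_to_base CV DV CD.
have [h [hI hC hD]] := arc_to_base C'V D'V C'D'.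
exists (act_mx (g *m invmx h)); split.
  exact/act_mx_graph_aut/isometryM/isometryV.
by have [hU _] := hI; split; apply: act_mx_mulV; rewrite // ?gC ?hC ?gD ?hD.
Qed.

End OrthogonalGraph.

Theorem theorem2p5 (n nu delta : nat) (z : 'Z_(2 ^ n)%N) :
  (1 <= n)%N -> (1 <= nu)%N -> (delta <= 2)%N -> z \is a GRing.unit ->
  vertex_transitive (orth_vertices n nu delta z) (orth_adj n nu delta z) /\
  arc_transitive (orth_vertices n nu delta z) (orth_adj n nu delta z).
Proof.
move=> n_gt0 nu_gt0 delta_le2 z_unit.
by split; [exact: orth_vertex_transitive | exact: orth_arc_transitive].
Qed.
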